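(* Under the standing assumptions, the matrices $\Gamma_{1,j}(a)$ ($0\le j\le n$) and $Q_{2,j}(a)$ ($0\le j\le n-1$) are invertible, and with $\mathbf r_j:=\Gamma_{1,j}(a)^{-1}\Theta_{1,j}(a)$ and $\mathbf t_j:=Q_{2,j}(a)^{-1}P_{2,j}(a)$ one has, for all $z\in\mathbb C$, $$d^{(2j+1)}(z)=\begin{pmatrix}I_q&\mathbf r_j\\0_q&I_q\end{pmatrix}\begin{pmatrix}I_q&0_q\\-(z-a)\mathbf m_j&I_q\end{pmatrix}\begin{pmatrix}I_q&-\mathbf r_j\\0_q&I_q\end{pmatrix},\qquad 0\le j\le n,$$ $$d^{(2j+2)}(z)=\begin{pmatrix}I_q&0_q\\-\mathbf t_j&I_q\end{pmatrix}\begin{pmatrix}I_q&(z-a)\mathbf l_j\\0_q&I_q\end{pmatrix}\begin{pmatrix}I_q&0_q\\ \mathbf t_j&I_q\end{pmatrix},\qquad 0\le j\le n-1.$$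
   Context: Let $q,n\in\mathbb N$ and let $a<b$ be real numbers. All matrices are complex; $I_q$, $0_q$ are the $q\times q$ identity and zero matrices. Let $s_0,\dots,s_{2n+1}$ be Hermitian $q\times q$ matrices and set $\widehat s_j:=-ab\,s_j+(a+b)s_{j+1}-s_{j+2}$. Define $H_{1,j}:=(s_{l+k})_{l,k=0}^j$, $H_{2,j}:=(\widehat s_{l+k})_{l,k=0}^{j}$, $K_{1,j}:=(bs_{l+k}-s_{l+k+1})_{l,k=0}^{j}$, $K_{2,j}:=(-as_{l+k}+s_{l+k+1})_{l,k=0}^j$. Standing assumption: $H_{1,n},H_{2,n-1},K_{1,n},K_{2,n}$ are positive definite. Let $T_0:=0_q$ and, for $j\ge1$, let $T_j$ be the $(j+1)\times(j+1)$ block matrix (blocks $q\times q$) with $I_q$ in block positions $(l+1,l)$, $l=0,\dots,j-1$, and $0_q$ elsewhere; $R_j(z):=(I_{(j+1)q}-zT_j)^{-1}$; $v_j:=\mathrm{col}(I_q,0_q,\dots,0_q)\in\mathbb C^{(j+1)q\times q}$. Let $u_{2,0}:=-(a+b)s_0+s_1$, $u_{2,j}:=\mathrm{col}(u_{2,0},-\widehat s_0,\dots,-\widehat s_{j-1})$, $\widetilde u_{1,j}:=\mathrm{col}(s_0,s_1-bs_0,\dots,s_j-bs_{j-1})$; for $j\ge1$, $Y_{2,j}:=\mathrm{col}(\widehat s_j,\dots,\widehat s_{2j-1})$, $\widetilde Y_{1,j}:=\mathrm{col}(bs_j-s_{j+1},\dots,bs_{2j-1}-s_{2j})$. Schur complements: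 $\widehat H_{2,0}:=\widehat s_0$, $\widehat H_{2,j}:=\widehat s_{2j}-Y_{2,j}^*H_{2,j-1}^{-1}Y_{2,j}$; $\widehat K_{1,0}:=bs_0-s_1$, $\widehat K_{1,j}:=bs_{2j}-s_{2j+1}-\widetilde Y_{1,j}^*K_{1,j-1}^{-1}\widetilde Y_{1,j}$. Polynomials: $P_{2,0}:=I_q$, $Q_{2,0}(z):=-(u_{2,0}+zs_0)$, $\Gamma_{1,0}:=I_q$, $\Theta_{1,0}:=s_0$; for $j\ge1$: $P_{2,j}(z):=(-Y_{2,j}^*H_{2,j-1}^{-1},I_q)R_j(z)v_j$, $Q_{2,j}(z):=-(-Y_{2,j}^*H_{2,j-1}^{-1},I_q)R_j(z)(u_{2,j}+zv_js_0)$, $\Gamma_{1,j}(z):=(-\widetilde Y_{1,j}^*K_{1,j-1}^{-1},I_q)R_j(z)v_j$, $\Theta_{1,j}(z):=(-\widetilde Y_{1,j}^*K_{1,j-1}^{-1},I_q)R_j(z)\widetilde u_{1,j}$. DSM parameters: $\lambda_j:=(u_{2,j}+av_js_0)^*R_j(a)^*H_{2,j}^{-1}R_j(a)(u_{2,j}+av_js_0)$, $\mu_j:=v_j^*R_j(a)^*K_{1,j}^{-1}R_j(a)v_j$; $\mathbf l_0:=\lambda_0$, $\mathbf l_j:=\lambda_j-\lambda_{j-1}$ ($1\le j\le n-1$); $\mathbf m_0:=\mu_0$, $\mathbf m_j:=\mu_j-\mu_{j-1}$ ($1\le j\le n$). Blaschke–Potapov factors: for $0\le j\le n-1$, $d^{(2j+2)}(z):=\begin{pmatrix}I_q+(z-a)Q_{2,j}^*(a)\widehat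 H_{2,j}^{-1}P_{2,j}(a) & (z-a)Q_{2,j}^*(a)\widehat H_{2,j}^{-1}Q_{2,j}(a)\\ -(z-a)P_{2,j}^*(a)\widehat H_{2,j}^{-1}P_{2,j}(a) & I_q-(z-a)P_{2,j}^*(a)\widehat H_{2,j}^{-1}Q_{2,j}(a)\end{pmatrix}$; for $0\le j\le n$, $d^{(2j+1)}(z):=\begin{pmatrix}I_q-(z-a)\Theta_{1,j}^*(a)\widehat K_{1,j}^{-1}\Gamma_{1,j}(a) & (z-a)\Theta_{1,j}^*(a)\widehat K_{1,j}^{-1}\Theta_{1,j}(a)\\ -(z-a)\Gamma_{1,j}^*(a)\widehat K_{1,j}^{-1}\Gamma_{1,j}(a) & I_q+(z-a)\Gamma_{1,j}^*(a)\widehat K_{1,j}^{-1}\Theta_{1,j}(a)\end{pmatrix}$. Here $F^*(a)$ means $(F(a))^*$. *)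

From HB Require Import structures.
From mathcomp Require Import all_boot all_order all_algebra.
Set Implicit Arguments. Unset Strict Implicit. Unset Printing Implicit Defensive.
Import Order.TTheory GRing.Theory Num.Theory.
Local Open Scope ring_scope.

Definition ctmx (C : numClosedFieldType) m n (A : 'M[C]_(m, n)) : 'M[C]_(n, m) :=
  (map_mx (fun x : C => x^*) A)^T.

Definition hermmx (C : numClosedFieldType) n (A : 'M[C]_n) : Prop := ctmx A = A.

Definition posdef (C : numClosedFieldType) n (A : 'M[C]_n) : Prop :=
  hermmx A /\ forall x : 'cV[C]_n, x != 0 -> 0 < (ctmx x *m A *m x) 0 0.

Definition bsz (q j : nat) : nat := (\sum_(i < j.+1) q)%N.

Lemma bszS q j : bsz q j.+1 = (bsz q j + q)%N.
Proof. by rewrite /bsz big_ord_recr. Qed.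

Definition bhankel (C : numClosedFieldType) q (F : nat -> 'M[C]_q) (j : nat)
  : 'M[C]_(bsz q j) :=
  @mxblock C j.+1 j.+1 (fun _ => q) (fun _ => q) (fun l k => F (l + k)%N).

Definition bcol (C : numClosedFieldType) q (F : nat -> 'M[C]_q) (j : nat)
  : 'M[C]_(bsz q j, q) :=
  @mxcol C j.+1 (fun _ => q) q (fun l => F (l : nat)).

Definition rowXI (C : numClosedFieldType) q j (X : 'M[C]_(q, bsz q j))
  : 'M[C]_(q, bsz q j.+1) :=
  castmx (erefl q, esym (bszS q j)) (row_mx X 1%:M).

Section Objects.
Variables (C : numClosedFieldType) (q : nat) (s : nat -> 'M[C]_q) (a b : C).

Definition shat (j : nat) : 'M[C]_q :=
  (- (a * b)) *: s j + (a + b) *: s j.+1 - s j.+2.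

Definition H1 j := bhankel s j.
Definition H2 j := bhankel shat j.
Definition K1 j := bhankel (fun k => b *: s k - s k.+1) j.
Definition K2 j := bhankel (fun k => - a *: s k + s k.+1) j.

Definition Tm j : 'M[C]_(bsz q j) :=
  @mxblock C j.+1 j.+1 (fun _ => q) (fun _ => q)
    (fun l k => if (l : nat) == k.+1 then 1%:M else 0).

Definition Rm j (z : C) : 'M[C]_(bsz q j) := invmx (1%:M - z *: Tm j).

Definition vv j : 'M[C]_(bsz q j, q) := bcol (fun l => if l == 0%N then 1%:M else 0) j.

Definition u20 : 'M[C]_q := - (a + b) *: s 0 + s 1.

Definition u2 j : 'M[C]_(bsz q j, q) :=
  bcol (fun l => if l == 0%N then u20 else - shat l.-1) j.

Definition ut1 j : 'M[C]_(bsz q j, q) :=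
  bcol (fun l => if l == 0%N then s 0 else s l - b *: s l.-1) j.

(* Y_{2,j'+1} = col(shat (j'+1), ..., shat (2j'+1)) *)
Definition Y2 j' : 'M[C]_(bsz q j', q) := bcol (fun l => shat (j'.+1 + l)) j'.
(* Ytilde_{1,j'+1} = col(b s_{j'+1} - s_{j'+2}, ..., b s_{2j'+1} - s_{2j'+2}) *)
Definition Yt1 j' : 'M[C]_(bsz q j', q) :=
  bcol (fun l => b *: s (j'.+1 + l) - s (j'.+1 + l).+1) j'.

Definition Hhat2 j : 'M[C]_q :=
  match j with
  | 0 => shat 0
  | j'.+1 => shat j.*2 - ctmx (Y2 j') *m invmx (H2 j') *m Y2 j'
  end.

Definition Khat1 j : 'M[C]_q :=
  match j with
  | 0 => b *: s 0 - s 1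
  | j'.+1 => b *: s j.*2 - s j.*2.+1 - ctmx (Yt1 j') *m invmx (K1 j') *m Yt1 j'
  end.

Definition P2 j (z : C) : 'M[C]_q :=
  match j with
  | 0 => 1%:M
  | j'.+1 => rowXI (- (ctmx (Y2 j') *m invmx (H2 j'))) *m Rm j'.+1 z *m vv j'.+1
  end.

Definition Q2 j (z : C) : 'M[C]_q :=
  match j with
  | 0 => - (u20 + z *: s 0)
  | j'.+1 => - (rowXI (- (ctmx (Y2 j') *m invmx (H2 j'))) *m Rm j'.+1 z
                 *m (u2 j'.+1 + z *: (vv j'.+1 *m s 0)))
  end.

Definition Gam1 j (z : C) : 'M[C]_q :=
  match j with
  | 0 => 1%:M
  | j'.+1 => rowXI (- (ctmx (Yt1 j') *m invmx (K1 j'))) *m Rm j'.+1 z *m vv j'.+1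
  end.

Definition The1 j (z : C) : 'M[C]_q :=
  match j with
  | 0 => s 0
  | j'.+1 => rowXI (- (ctmx (Yt1 j') *m invmx (K1 j'))) *m Rm j'.+1 z *m ut1 j'.+1
  end.

Definition lam j : 'M[C]_q :=
  let w := u2 j + a *: (vv j *m s 0) in
  ctmx w *m ctmx (Rm j a) *m invmx (H2 j) *m Rm j a *m w.

Definition mu j : 'M[C]_q :=
  ctmx (vv j) *m ctmx (Rm j a) *m invmx (K1 j) *m Rm j a *m vv j.

Definition lbf j : 'M[C]_q := if j is j'.+1 then lam j - lam j' else lam 0.
Definition mbf j : 'M[C]_q := if j is j'.+1 then mu j - mu j' else mu 0.

Definition d_even j (z : C) : 'M[C]_(q + q) :=
  let P := P2 j a in let Q := Q2 j a in let Hi := invmx (Hhat2 j) in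
  block_mx (1%:M + (z - a) *: (ctmx Q *m Hi *m P)) ((z - a) *: (ctmx Q *m Hi *m Q))
           (- ((z - a) *: (ctmx P *m Hi *m P))) (1%:M - (z - a) *: (ctmx P *m Hi *m Q)).

Definition d_odd j (z : C) : 'M[C]_(q + q) :=
  let G := Gam1 j a in let T := The1 j a in let Ki := invmx (Khat1 j) in
  block_mx (1%:M - (z - a) *: (ctmx T *m Ki *m G)) ((z - a) *: (ctmx T *m Ki *m T))
           (- ((z - a) *: (ctmx G *m Ki *m G))) (1%:M + (z - a) *: (ctmx G *m Ki *m T)).

End Objects.

From HB Require Import structures.
From mathcomp Require Import all_boot all_order all_algebra.
From mathcomp Require Import ring zify.
Set Implicit Arguments. Unset Strict Implicit. Unset Printing Implicit Defensive.
Import Order.TTheory GRing.Theory Num.Theory.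
Local Open Scope ring_scope.

(* The row [(- Y^* H^-1, I)] lists the coefficients of the monic matrix
   polynomial of degree [j] orthogonal, for the Hankel moments, to all lower
   degrees; since [R_j(a) v_j] is the block column of powers of [a], the values
   [Gamma_{1,j}(a)] and [P_{2,j}(a)] are evaluations at [a] of such polynomials,
   and the Schur complements are the positive forms [p H p^*].  Synthetic
   division by [X - a] relates the moments [c_k = b s_k - s_{k+1}] and
   [shat_k = c_{k+1} - a c_k]; it factors these positive forms through
   [Gamma_{1,j}(a)] and [Q_{2,j}(a)], which gives their invertibility and the
   Hermitian symmetries [Theta Gamma^* = Gamma Theta^*], [P Q^* = Q P^*].  The
   bordered-matrix formula identifies the increments [m_j], [l_j] of the forms
   [V^* H_j^-1 V] with [Gamma^* Khat^-1 Gamma] and [Q^* Hhat^-1 Q], and the two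
   symmetries are exactly what the triangular factorizations of [d] need. *)

Section ConjTranspose.
Variable C : numClosedFieldType.

Lemma ctmxK m n (A : 'M[C]_(m, n)) : ctmx (ctmx A) = A.
Proof. by apply/matrixP => i j; rewrite !mxE conjCK. Qed.

Lemma ctmxM m n p (A : 'M[C]_(m, n)) (B : 'M[C]_(n, p)) :
  ctmx (A *m B) = ctmx B *m ctmx A.
Proof. by rewrite /ctmx map_mxM trmx_mul. Qed.

Lemma ctmxD m n (A B : 'M[C]_(m, n)) : ctmx (A + B) = ctmx A + ctmx B.
Proof. by apply/matrixP => i j; rewrite !mxE rmorphD. Qed.

Lemma ctmxN m n (A : 'M[C]_(m, n)) : ctmx (- A) = - ctmx A.
Proof. by apply/matrixP => i j; rewrite !mxE rmorphN. Qed.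

Lemma ctmxB m n (A B : 'M[C]_(m, n)) : ctmx (A - B) = ctmx A - ctmx B.
Proof. by rewrite ctmxD ctmxN. Qed.

Lemma ctmx0 m n : ctmx (0 : 'M[C]_(m, n)) = 0.
Proof. by apply/matrixP => i j; rewrite !mxE rmorph0. Qed.

Lemma ctmxZ m n x (A : 'M[C]_(m, n)) : ctmx (x *: A) = x^* *: ctmx A.
Proof. by apply/matrixP => i j; rewrite !mxE rmorphM. Qed.

Lemma ctmx1 n : ctmx (1%:M : 'M[C]_n) = 1%:M.
Proof. by rewrite /ctmx map_mx1 trmx1. Qed.

Lemma ctmx_sum m n (I : finType) (F : I -> 'M[C]_(m, n)) :
  ctmx (\sum_i F i) = \sum_i ctmx (F i).
Proof.
apply/matrixP => i j; rewrite !mxE !summxE rmorph_sum; apply: eq_bigr => k _.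
by rewrite !mxE.
Qed.

Lemma ctmx_unit n (A : 'M[C]_n) : (ctmx A \in unitmx) = (A \in unitmx).
Proof. by rewrite /ctmx unitmx_tr map_unitmx. Qed.

Lemma ctmx_mxcol k (p_ : 'I_k -> nat) n (F : forall i, 'M[C]_(p_ i, n)) :
  ctmx (\mxcol_i F i) = \mxrow_i ctmx (F i).
Proof. by apply/matrixP => i j; rewrite !mxE. Qed.

Lemma unitmx_form_gt0 n (A : 'M[C]_n) :
  (forall v : 'rV[C]_n, v != 0 -> 0 < (v *m A *m ctmx v) 0 0) -> A \in unitmx.
Proof.
move=> A_gt0; rewrite unitmxE unitfE; apply/negP => /det0P[v v0 vA].
by have := A_gt0 v v0; rewrite vA mul0mx mxE ltxx.
Qed.

End ConjTranspose.

Lemma bszE q j : bsz q j = (j.+1 * q)%N.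
Proof. by rewrite /bsz sum_nat_const card_ord. Qed.

Lemma bsz_sig q j (s : 'I_(bsz q j)) :
  (@tagnat.sig1 j.+1 (fun _ => q) s : nat) = (s %/ q)%N /\
  (@tagnat.sig2 j.+1 (fun _ => q) s : nat) = (s %% q)%N.
Proof.
have sq : (tagnat.sig2 s < q)%N by case: (tagnat.sig2 s).
have le_s1 : (tagnat.sig1 s <= j.+1)%N by apply: ltnW; case: (tagnat.sig1 s).
have offset : (\sum_(i < j.+1 | (i < tagnat.sig1 s)%N) q = tagnat.sig1 s * q)%N.
  by rewrite (big_ord_narrow le_s1) sum_nat_const card_ord.
have -> : (s : nat) = (tagnat.sig1 s * q + tagnat.sig2 s)%N.
  by rewrite -offset; exact: tagnat.rect.
by rewrite divnMDl ?(leq_ltn_trans _ sq) // divn_small // addn0 modnMDl modn_small.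
Qed.

Section BlockColumns.
Variable C : numClosedFieldType.
Implicit Types q j : nat.

Definition bcolmx q m (g : nat -> 'M[C]_(q, m)) j : 'M[C]_(bsz q j, m) :=
  @mxcol C j.+1 (fun _ => q) m (fun l => g l).

Lemma bcolE q (g : nat -> 'M[C]_q) j : bcol g j = bcolmx g j.
Proof. by []. Qed.

Lemma bcolmxE q m j (g : nat -> 'M[C]_(q, m)) s k :
  bcolmx g j s k = g (s %/ q)%N (@tagnat.sig2 j.+1 (fun _ => q) s) k.
Proof. by rewrite /bcolmx mxE (bsz_sig s).1. Qed.

Lemma bcolmxS q m j (g : nat -> 'M[C]_(q, m)) :
  bcolmx g j.+1 = castmx (esym (bszS q j), erefl) (col_mx (bcolmx g j) (g j.+1)).
Proof.
apply/matrixP => s k; rewrite castmxE bcolmxE /= mxE.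
case: splitP => s' /= Es'; rewrite cast_ord_id.
  rewrite bcolmxE -Es'; congr (g _ _ k); apply/val_inj.
  by rewrite /= (bsz_sig s).2 (bsz_sig s').2 Es'.
have q_gt0 : (0 < q)%N by case: (s') => x; case: (q).
have -> : (s %/ q)%N = j.+1 by rewrite Es' bszE divnMDl // divn_small ?addn0.
congr (g _ _ k); apply/val_inj.
by rewrite /= (bsz_sig s).2 Es' bszE modnMDl modn_small.
Qed.

Lemma eq_bcolmx q m j (f g : nat -> 'M[C]_(q, m)) :
  (forall l, (l <= j)%N -> f l = g l) -> bcolmx f j = bcolmx g j.
Proof. by move=> fg; apply: eq_mxcol => l; apply: fg; rewrite -ltnS. Qed.

Lemma bcolmxD q m j (f g : nat -> 'M[C]_(q, m)) :
  bcolmx f j + bcolmx g j = bcolmx (fun l => f l + g l) j.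
Proof. by rewrite /bcolmx mxcolD. Qed.

Lemma bcolmxZ q m j x (f : nat -> 'M[C]_(q, m)) :
  x *: bcolmx f j = bcolmx (fun l => x *: f l) j.
Proof. by apply/matrixP => s t; rewrite !mxE. Qed.

Lemma bcolmx_mul q m n j (g : nat -> 'M[C]_(q, m)) (A : 'M[C]_(m, n)) :
  bcolmx g j *m A = bcolmx (fun l => g l *m A) j.
Proof. by rewrite /bcolmx mxcol_mul. Qed.

Lemma bcolmx_blocks q m j (x : 'M[C]_(bsz q j, m)) :
  x = bcolmx (fun k => @submxcol C j.+1 (fun _ => q) m x (inord k)) j.
Proof. by rewrite -{1}[x]submxcolK; apply: eq_mxcol => k /=; rewrite inord_val. Qed.

Lemma bcolmxK q m j (g : nat -> 'M[C]_(q, m)) k : (k <= j)%N ->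
  @submxcol C j.+1 (fun _ => q) m (bcolmx g j) (inord k) = g k.
Proof. by move=> le_kj; rewrite /bcolmx mxcolK inordK. Qed.

Lemma mul_mx_bcolmx q m j (X : 'M[C]_(q, bsz q j)) (g : nat -> 'M[C]_(q, m)) :
  X *m bcolmx g j = \sum_(k < j.+1) submxrow X k *m g k.
Proof. by rewrite -{1}[X]submxrowK mul_mxrow_mxcol. Qed.

Lemma mul_ctmx_bcolmx q m n j (f : nat -> 'M[C]_(q, n)) (g : nat -> 'M[C]_(q, m)) :
  ctmx (bcolmx f j) *m bcolmx g j = \sum_(k < j.+1) ctmx (f k) *m g k.
Proof. by rewrite /bcolmx ctmx_mxcol mul_mxrow_mxcol. Qed.

Lemma mul_bhankel_bcolmx q m j (h : nat -> 'M[C]_q) (g : nat -> 'M[C]_(q, m)) :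
  bhankel h j *m bcolmx g j = bcolmx (fun l => \sum_(k < j.+1) h (l + k)%N *m g k) j.
Proof. by rewrite /bhankel mul_mxblock_mxrow. Qed.

Lemma mul_rowXI_bcolmx q j (X : 'M[C]_(q, bsz q j)) m (g : nat -> 'M[C]_(q, m)) :
  rowXI X *m bcolmx g j.+1 = X *m bcolmx g j + g j.+1.
Proof.
rewrite /rowXI bcolmxS.
have cast_mul n p (e : n = p) (Y : 'M[C]_(q, n)) (Z : 'M[C]_(n, m)) :
    castmx (erefl, e) Y *m castmx (e, erefl) Z = Y *m Z by case: p / e.
by rewrite cast_mul mul_row_col mul1mx.
Qed.

End BlockColumns.

Section Resolvent.
Variables (C : numClosedFieldType) (q : nat).

Lemma mxblock1 j :
  (1%:M : 'M[C]_(bsz q j)) =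
  @mxblock C j.+1 j.+1 (fun _ => q) (fun _ => q)
    (fun l k => if (l : nat) == k then 1%:M else 0).
Proof.
rewrite -(mxdiagZ (p_ := fun _ : 'I_j.+1 => q) 1) /mxdiag.
by apply: eq_mxblock => l k; rewrite conform_mx_id.
Qed.

Lemma mul_shift_bcolmx j z m (g : nat -> 'M[C]_(q, m)) :
  (1%:M - z *: Tm C q j) *m bcolmx g j =
  bcolmx (fun l => g l - (if l is l'.+1 then z *: g l' else 0)) j.
Proof.
have -> : 1%:M - z *: Tm C q j = @mxblock C j.+1 j.+1 (fun _ => q) (fun _ => q)
    (fun l k => (if (l : nat) == k then 1%:M else 0)
                - z *: (if (l : nat) == k.+1 then 1%:M else 0)).
  by rewrite mxblock1 /Tm; apply/matrixP => s t; rewrite !mxE.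
rewrite mul_mxblock_mxrow; apply: eq_mxcol => l.
under eq_bigr do rewrite mulmxBl -scalemxAl.
rewrite sumrB -scaler_sumr.
have pick k0 : \sum_(i < j.+1) (if k0 == (i : nat) then 1%:M else 0) *m g i =
               if (k0 < j.+1)%N then g k0 else 0.
  rewrite (eq_bigr (fun i : 'I_j.+1 => if (i : nat) == k0 then g i else 0)).
    by rewrite -big_mkcond big_ord1_eq.
  by move=> i _; rewrite eq_sym; case: eqP; rewrite ?mul1mx ?mul0mx.
rewrite pick ltn_ord; case: l => [[|l] lt_lj] /=.
  by rewrite big1 ?scaler0 // => i _; rewrite mul0mx.
under eq_bigr do rewrite eqSS.
by rewrite pick (ltn_trans _ lt_lj).
Qed.

Definition horner_part m (z : C) (g : nat -> 'M[C]_(q, m)) (l : nat) :=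
  \sum_(k < l.+1) z ^+ (l - k) *: g k.

Lemma horner_part0 m z (g : nat -> 'M[C]_(q, m)) : horner_part z g 0 = g 0.
Proof. by rewrite /horner_part big_ord1 expr0 scale1r. Qed.

Lemma horner_partS m z (g : nat -> 'M[C]_(q, m)) l :
  horner_part z g l.+1 = z *: horner_part z g l + g l.+1.
Proof.
rewrite /horner_part big_ord_recr /= subnn expr0 scale1r scaler_sumr; congr (_ + _).
by apply: eq_bigr => i _; rewrite scalerA -exprS subSn // -ltnS.
Qed.

Lemma mul_shift_horner_part j z m (g : nat -> 'M[C]_(q, m)) :
  (1%:M - z *: Tm C q j) *m bcolmx (horner_part z g) j = bcolmx g j.
Proof.
rewrite mul_shift_bcolmx; apply: eq_bcolmx => -[|l] _; first by rewrite horner_part0 subr0.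
by rewrite horner_partS addrC addKr.
Qed.

Lemma shift_unit j z : 1%:M - z *: Tm C q j \in unitmx.
Proof.
pose L := @mxrow C j.+1 (fun _ => q) (bsz q j) (fun k =>
  bcolmx (horner_part z (fun l => if l == (k : nat) then 1%:M else 0)) j).
suff : (1%:M - z *: Tm C q j) *m L = 1%:M by case/mulmx1_unit.
rewrite /L mul_mxrow [RHS]mxblock1 mxblockEh; apply: eq_mxrow => k.
by rewrite mul_shift_horner_part.
Qed.

Lemma Rm_bcolmx j z m (g : nat -> 'M[C]_(q, m)) :
  Rm q j z *m bcolmx g j = bcolmx (horner_part z g) j.
Proof. by rewrite /Rm -(mul_shift_horner_part j z g) mulKmx ?shift_unit. Qed.

End Resolvent.

Lemma sum_ord_trunc (V : zmodType) n j (F : nat -> V) : (j <= n)%N ->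
  (forall l, (j < l)%N -> F l = 0) -> \sum_(l < n.+1) F l = \sum_(l < j.+1) F l.
Proof.
move=> le_jn F0; rewrite -!(big_mkord xpredT) (big_cat_nat _ (n := j.+1)) //=.
rewrite [X in _ + X]big1_seq ?addr0 // => i /andP[_].
by rewrite mem_index_iota => /andP[lt_ji _]; exact: F0.
Qed.

Section HankelForms.
Variables (C : numClosedFieldType) (q : nat).
Implicit Types h F : nat -> 'M[C]_q.

Lemma bhankel_form h j m n (f : nat -> 'M[C]_(q, m)) (g : nat -> 'M[C]_(q, n)) :
  ctmx (bcolmx f j) *m bhankel h j *m bcolmx g j =
  \sum_(l < j.+1) \sum_(k < j.+1) ctmx (f l) *m h (l + k)%N *m g k.
Proof.
rewrite -mulmxA mul_bhankel_bcolmx mul_ctmx_bcolmx; apply: eq_bigr => l _.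
by rewrite mulmx_sumr; apply: eq_bigr => k _; rewrite mulmxA.
Qed.

(* Extending [g] by zero embeds the form of [bhankel h j] into that of [bhankel h N]. *)
Lemma bhankel_form_gt0 N j h (g : nat -> 'cV[C]_q) :
  posdef (bhankel h N) -> (j <= N)%N -> bcolmx g j != 0 ->
  0 < (ctmx (bcolmx g j) *m bhankel h j *m bcolmx g j) 0 0.
Proof.
move=> [_ H_gt0] le_jN g_neq0.
pose g' k := if (k <= j)%N then g k else 0.
have g'_neq0 : bcolmx g' N != 0.
  apply: contra g_neq0 => /eqP g'0; apply/eqP.
  rewrite [LHS]bcolmx_blocks -[RHS](@mxcol0 C j.+1 (fun _ => q)).
  apply: eq_mxcol => k /=; have le_kj : (k <= j)%N := ltn_ord k.
  rewrite bcolmxK //; have := bcolmxK g' (leq_trans le_kj le_jN).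
  by rewrite g'0 submxcol0 /g' le_kj => <-.
suff <- : ctmx (bcolmx g' N) *m bhankel h N *m bcolmx g' N =
          ctmx (bcolmx g j) *m bhankel h j *m bcolmx g j by exact: H_gt0.
rewrite !bhankel_form (@sum_ord_trunc _ N j (fun l =>
    \sum_(k < N.+1) ctmx (g' l) *m h (l + k)%N *m g' k)) //; last first.
  by move=> l lt_jl; rewrite big1 // => k _; rewrite /g' leqNgt lt_jl ctmx0 !mul0mx.
apply: eq_bigr => l _; rewrite (@sum_ord_trunc _ N j (fun k =>
    ctmx (g' l) *m h (l + k)%N *m g' k)) //; last first.
  by move=> k lt_jk; rewrite /g' (leqNgt k) lt_jk mulmx0.
apply: eq_bigr => k _; have le_lj : (l <= j)%N := ltn_ord l.
by have le_kj : (k <= j)%N := ltn_ord k; rewrite /g' le_lj le_kj.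
Qed.

Lemma bhankel_unit N j h : posdef (bhankel h N) -> (j <= N)%N -> bhankel h j \in unitmx.
Proof.
move=> H_pd le_jN; apply: unitmx_form_gt0 => v v_neq0.
rewrite -[v]ctmxK [ctmx v]bcolmx_blocks ctmxK.
apply: bhankel_form_gt0 H_pd le_jN _.
rewrite -bcolmx_blocks; apply: contra v_neq0 => /eqP/(congr1 (@ctmx C _ _)).
by rewrite ctmxK ctmx0 => ->.
Qed.

Definition bquad j h F : 'M[C]_q :=
  \sum_(l < j.+1) \sum_(k < j.+1) F l *m h (l + k)%N *m ctmx (F k).

Lemma bquad_gt0 N j h F l0 (v : 'rV[C]_q) :
  posdef (bhankel h N) -> (j <= N)%N -> (l0 <= j)%N -> F l0 = 1%:M -> v != 0 ->
  0 < (v *m bquad j h F *m ctmx v) 0 0.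
Proof.
move=> H_pd le_jN le_l0j F_l0 v_neq0.
pose f k := ctmx (F k) *m ctmx v.
have f_neq0 : bcolmx f j != 0.
  apply: contra v_neq0 => /eqP f0.
  have := bcolmxK f le_l0j; rewrite f0 submxcol0 /f F_l0 ctmx1 mul1mx.
  by move=> /(congr1 (@ctmx C _ _)); rewrite ctmxK ctmx0 => <-.
have := bhankel_form_gt0 H_pd le_jN f_neq0; rewrite bhankel_form.
suff -> : v *m bquad j h F *m ctmx v =
  \sum_(l < j.+1) \sum_(k < j.+1) ctmx (f l) *m h (l + k)%N *m f k by [].
rewrite /bquad mulmx_sumr mulmx_suml; apply: eq_bigr => l _.
rewrite mulmx_sumr mulmx_suml; apply: eq_bigr => k _.
by rewrite /f ctmxM !ctmxK !mulmxA.
Qed.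

Lemma bquad_unit N j h F l0 :
  posdef (bhankel h N) -> (j <= N)%N -> (l0 <= j)%N -> F l0 = 1%:M ->
  bquad j h F \in unitmx.
Proof.
move=> H_pd le_jN le_l0j F_l0; apply: unitmx_form_gt0 => v.
exact: bquad_gt0 H_pd le_jN le_l0j F_l0.
Qed.

Lemma bquad_herm j h F :
  (forall k, (k <= j.*2)%N -> ctmx (h k) = h k) -> ctmx (bquad j h F) = bquad j h F.
Proof.
move=> h_herm; rewrite /bquad ctmx_sum exchange_big /=; apply: eq_bigr => k _.
rewrite ctmx_sum; apply: eq_bigr => l _.
have le_kl : (k + l <= j.*2)%N by rewrite -addnn leq_add // -ltnS.
by rewrite !ctmxM ctmxK (h_herm _ le_kl) !mulmxA addnC.
Qed.

End HankelForms.

Section OrthogonalPolynomials.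
Variables (C : numClosedFieldType) (q : nat).
Implicit Types h p V Y : nat -> 'M[C]_q.

Definition hankel_herm h j := forall k, (k <= j.*2)%N -> ctmx (h k) = h k.

Lemma hankel_herm_le h i j : hankel_herm h j -> (i <= j)%N -> hankel_herm h i.
Proof. by move=> h_herm le_ij k le_k; apply: h_herm; rewrite (leq_trans le_k) ?leq_double. Qed.

Definition hankel_orth h j p :=
  forall l, (l < j)%N -> \sum_(k < j.+1) p k *m h (k + l)%N = 0.

Definition hankel_hat h j p := \sum_(k < j.+1) p k *m h (k + j)%N.

Definition Ycol h j' : 'M[C]_(bsz q j', q) := bcolmx (fun l => h (j'.+1 + l)%N) j'.

Definition orth_row h j' : 'M[C]_(q, bsz q j') :=
  - (ctmx (Ycol h j') *m invmx (bhankel h j')).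

(* Coefficients of the monic orthogonal matrix polynomial of degree [j]:
   the row [(- Y^* H^-1, I)] read block by block. *)
Definition opoly h j (k : nat) : 'M[C]_q :=
  if j is j'.+1 then
    if (k < j'.+1)%N then @submxrow C j'.+1 (fun _ => q) q (orth_row h j') (inord k)
    else 1%:M
  else 1%:M.

Lemma opoly_lead h j : opoly h j j = 1%:M.
Proof. by case: j => //= j; rewrite ltnn. Qed.

Lemma mul_rowXI_bcolmx_opoly h j' m (g : nat -> 'M[C]_(q, m)) :
  rowXI (orth_row h j') *m bcolmx g j'.+1 = \sum_(k < j'.+2) opoly h j'.+1 k *m g k.
Proof.
rewrite mul_rowXI_bcolmx mul_mx_bcolmx [RHS]big_ord_recr /= ltnn mul1mx; congr (_ + _).
by apply: eq_bigr => k _; rewrite ltn_ord inord_val.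
Qed.

Lemma opoly_orth h j : bhankel h j.-1 \in unitmx -> hankel_herm h j ->
  hankel_orth h j (opoly h j).
Proof.
case: j => [_ _ //|j'] /= H_unit h_herm l lt_lj.
have : orth_row h j' *m bhankel h j' = - ctmx (Ycol h j').
  by rewrite /orth_row mulNmx mulmxKV.
rewrite -{1}[orth_row h j']submxrowK mul_mxrow_mxblock.
rewrite /Ycol /bcolmx ctmx_mxcol -mxrowN.
move=> /(congr1 (fun M => @submxrow C j'.+1 (fun _ => q) q M (inord l))).
rewrite !mxrowK inordK // => orth_l.
rewrite big_ord_recr /= ltnn mul1mx.
under eq_bigr do rewrite ltn_ord inord_val.
have le_l : (j'.+1 + l <= j'.+1.*2)%N by rewrite -addnn leq_add2l ltnW.
by rewrite orth_l h_herm // addNr.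
Qed.

Lemma opoly_hat h j' : bhankel h j' \in unitmx ->
  h (j'.+1).*2 - ctmx (Ycol h j') *m invmx (bhankel h j') *m Ycol h j' =
  hankel_hat h j'.+1 (opoly h j'.+1).
Proof.
move=> H_unit; rewrite /hankel_hat big_ord_recr /= ltnn mul1mx addnn addrC.
congr (_ + _); rewrite -mulNmx -/(orth_row h j') /Ycol mul_mx_bcolmx.
by apply: eq_bigr => k _; rewrite ltn_ord addnC inord_val.
Qed.

Lemma hankel_hat_bquad h j p : hankel_orth h j p -> p j = 1%:M -> hankel_herm h j ->
  hankel_hat h j p = bquad j h p.
Proof.
move=> p_orth p_lead h_herm.
rewrite /bquad exchange_big /= big_ord_recr /= big1 ?add0r.
  rewrite -mulmx_suml p_lead ctmx1 mulmx1; apply: eq_bigr => k _; by rewrite addnC.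
by move=> k _; rewrite -mulmx_suml p_orth // mul0mx.
Qed.

Lemma sum_hankel_ctmx h j p l : hankel_herm h j -> (l <= j)%N ->
  \sum_(k < j.+1) h (l + k)%N *m ctmx (p k) = ctmx (\sum_(k < j.+1) p k *m h (k + l)%N).
Proof.
move=> h_herm le_lj; rewrite ctmx_sum; apply: eq_bigr => k _.
have le_kl : (k + l <= j.*2)%N by rewrite -addnn leq_add // -ltnS.
by rewrite ctmxM (h_herm _ le_kl) addnC.
Qed.

(* The bordered system [H_j X = V] is solved by extending a solution [Y] of the
   [j - 1] system with the correction [p^* (hat H)^-1 beta], [beta = sum p_k V_k]. *)
Lemma inv_form_schur h j p V Y :
  hankel_orth h j p -> p j = 1%:M -> hankel_herm h j ->
  bhankel h j \in unitmx -> hankel_hat h j p \in unitmx ->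
  (forall l, (l < j)%N -> \sum_(k < j) h (l + k)%N *m Y k = V l) ->
  ctmx (bcolmx V j) *m invmx (bhankel h j) *m bcolmx V j =
  \sum_(k < j) ctmx (V k) *m Y k +
  ctmx (\sum_(k < j.+1) p k *m V k) *m invmx (hankel_hat h j p) *m
  (\sum_(k < j.+1) p k *m V k).
Proof.
move=> p_orth p_lead h_herm H_unit hat_unit Y_sol.
set beta := \sum_(k < j.+1) p k *m V k.
set Hi := invmx (hankel_hat h j p).
pose X k := (if (k < j)%N then Y k else 0) + ctmx (p k) *m Hi *m beta.
have X_sol : bhankel h j *m bcolmx X j = bcolmx V j.
  rewrite mul_bhankel_bcolmx; apply: eq_bcolmx => l le_lj.
  under eq_bigr do rewrite /X mulmxDr.
  rewrite big_split /= big_ord_recr /= ltnn mulmx0 addr0.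
  under eq_bigr do rewrite ltn_ord.
  under [X in _ + X]eq_bigr do rewrite !mulmxA -(mulmxA _ Hi).
  rewrite -mulmx_suml sum_hankel_ctmx //.
  move: le_lj; rewrite leq_eqVlt => /orP[/eqP ->|lt_lj]; last first.
    by rewrite p_orth // ctmx0 mul0mx addr0 Y_sol.
  rewrite -/(hankel_hat h j p) hankel_hat_bquad // bquad_herm //.
  rewrite -hankel_hat_bquad // mulmxA mulmxV // mul1mx.
  rewrite /beta big_ord_recr /= p_lead mul1mx.
  suff -> : \sum_(i < j) p i *m V i = - \sum_(k < j) h (j + k)%N *m Y k.
    by rewrite addrA addrN add0r.
  transitivity (\sum_(i < j) p i *m \sum_(k < j) h (i + k)%N *m Y k).
    by apply: eq_bigr => i _; rewrite Y_sol.
  rewrite -sumrN; under eq_bigr do rewrite mulmx_sumr.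
  rewrite exchange_big /=; apply: eq_bigr => k _.
  under eq_bigr do rewrite mulmxA.
  rewrite -mulmx_suml -mulNmx; congr (_ *m _).
  have := p_orth k (ltn_ord k); rewrite big_ord_recr /= p_lead mul1mx => /eqP.
  by rewrite addr_eq0 => /eqP ->; rewrite addnC.
have X_eq : invmx (bhankel h j) *m bcolmx V j = bcolmx X j by rewrite -X_sol mulKmx.
rewrite -mulmxA X_eq mul_ctmx_bcolmx.
under eq_bigr do rewrite /X mulmxDr.
rewrite big_split /= big_ord_recr /= ltnn mulmx0 addr0; congr (_ + _).
  by apply: eq_bigr => k _; rewrite ltn_ord.
rewrite /beta ctmx_sum !mulmx_suml; apply: eq_bigr => k _.
by rewrite ctmxM !mulmxA.
Qed.

Definition inv_form h j V := ctmx (bcolmx V j) *m invmx (bhankel h j) *m bcolmx V j.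

Lemma inv_formS h j' p V :
  hankel_orth h j'.+1 p -> p j'.+1 = 1%:M -> hankel_herm h j'.+1 ->
  bhankel h j'.+1 \in unitmx -> bhankel h j' \in unitmx ->
  hankel_hat h j'.+1 p \in unitmx ->
  inv_form h j'.+1 V - inv_form h j' V =
  ctmx (\sum_(k < j'.+2) p k *m V k) *m invmx (hankel_hat h j'.+1 p) *m
  (\sum_(k < j'.+2) p k *m V k).
Proof.
move=> p_orth p_lead h_herm H_unit H'_unit hat_unit.
pose Y k := @submxcol C j'.+1 (fun _ => q) q (invmx (bhankel h j') *m bcolmx V j') (inord k).
have Y_col : bcolmx Y j' = invmx (bhankel h j') *m bcolmx V j' by rewrite -bcolmx_blocks.
have Y_sol l : (l < j'.+1)%N -> \sum_(k < j'.+1) h (l + k)%N *m Y k = V l.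
  move=> lt_lj; have := congr1 (mulmx (bhankel h j')) Y_col.
  rewrite mulKVmx // mul_bhankel_bcolmx.
  move=> /(congr1 (fun M => @submxcol C j'.+1 (fun _ => q) q M (inord l))).
  by rewrite !bcolmxK.
rewrite /inv_form (inv_form_schur p_orth p_lead h_herm H_unit hat_unit Y_sol).
by rewrite -[ctmx (bcolmx V j') *m _ *m _]mulmxA -Y_col mul_ctmx_bcolmx addrAC subrr add0r.
Qed.

Lemma inv_form0 h V : ctmx (h 0%N) = h 0%N -> bhankel h 0 \in unitmx ->
  h 0%N \in unitmx -> inv_form h 0 V = ctmx (V 0%N) *m invmx (h 0%N) *m V 0%N.
Proof.
move=> h_herm H_unit h_unit.
have hat0 : hankel_hat h 0 (fun _ => 1%:M) = h 0%N by rewrite /hankel_hat big_ord1 mul1mx.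
rewrite /inv_form (@inv_form_schur h 0 (fun _ => 1%:M) V (fun _ => 0)) ?hat0 //.
  by rewrite big_ord0 add0r big_ord1 mul1mx.
by case.
Qed.

End OrthogonalPolynomials.

Section SyntheticDivision.
Variables (C : numClosedFieldType) (q : nat).
Implicit Types p f : nat -> 'M[C]_q.

Definition peval (a : C) p j := \sum_(k < j.+1) a ^+ k *: p k.

(* Coefficients of the quotient of [sum_k p_k X^k] by [X - a]. *)
Definition pquot (a : C) p j m :=
  \sum_(k < j.+1) (if (m < k)%N then a ^+ (k - m.+1) *: p k else 0).

Lemma sum_pow_telescope (a : C) f k :
  \sum_(m < k) a ^+ (k - m.+1) *: (f m.+1 - a *: f m) = f k - a ^+ k *: f 0.
Proof.
elim: k => [|k IH]; first by rewrite big_ord0 expr0 scale1r subrr.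
rewrite big_ord_recr /= subnn expr0 scale1r.
under eq_bigr => m _ do rewrite subSS -subnSK // exprS -scalerA.
by rewrite -scaler_sumr IH scalerBr scalerA -exprS addrC addrA subrK addrC.
Qed.

Lemma peval_quot (a : C) p j f :
  \sum_(k < j.+1) p k *m f k - peval a p j *m f 0 =
  \sum_(m < j) pquot a p j m *m (f m.+1 - a *: f m).
Proof.
under [RHS]eq_bigr do rewrite /pquot mulmx_suml.
rewrite exchange_big /= /peval mulmx_suml -sumrB; apply: eq_bigr => k _.
under eq_bigr => m _ do rewrite (fun_if (mulmx^~ _)) mul0mx -scalemxAl scalemxAr.
have le_kj : (k <= j)%N := ltn_ord k.
rewrite -big_mkcond /= (big_ord_narrow le_kj) /= -mulmx_sumr sum_pow_telescope.
by rewrite mulmxBr -scalemxAl scalemxAr.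
Qed.

Lemma pquot_lead (a : C) p j : pquot a p j.+1 j = p j.+1.
Proof.
rewrite /pquot big_ord_recr /= ltnSn subnn expr0 scale1r big1 ?add0r //.
by move=> k _; rewrite ltnNge -ltnS ltn_ord.
Qed.

End SyntheticDivision.

Definition sshift (C : numClosedFieldType) q (s : nat -> 'M[C]_q) (b : C) k :=
  b *: s k - s k.+1.

Section ShiftedMoments.
Variables (C : numClosedFieldType) (q : nat) (s : nat -> 'M[C]_q) (a b : C).
Hypotheses (a_real : a^* = a) (b_real : b^* = b).
Implicit Types p : nat -> 'M[C]_q.

Local Notation c := (sshift s b).
Local Notation hs := (shat s a b).

Lemma shat_sshift k : hs k = c k.+1 - a *: c k.
Proof. by apply/matrixP => i l; rewrite /shat /sshift !mxE; ring. Qed.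

Lemma sshift_herm k :
  ctmx (s k) = s k -> ctmx (s k.+1) = s k.+1 -> ctmx (c k) = c k.
Proof. by move=> sk sk1; rewrite /sshift ctmxB ctmxZ b_real sk sk1. Qed.

Lemma shat_herm k : ctmx (s k) = s k -> ctmx (s k.+1) = s k.+1 ->
  ctmx (s k.+2) = s k.+2 -> ctmx (hs k) = hs k.
Proof. by move=> sk sk1 sk2; rewrite shat_sshift ctmxB ctmxZ a_real !sshift_herm. Qed.

Lemma sum_pquot_shat j p k : hankel_orth c j p -> (k < j)%N ->
  \sum_(m < j) pquot a p j m *m hs (m + k)%N = - (peval a p j *m c k).
Proof.
move=> p_orth lt_kj; have := peval_quot a p j (fun i => c (i + k)%N).
rewrite p_orth // add0n sub0r => ->; apply: eq_bigr => m _.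
by rewrite shat_sshift addSn.
Qed.

Lemma bquad_pquot_shat j' p : hankel_orth c j'.+1 p ->
  bquad j' hs (pquot a p j'.+1) =
  peval a p j'.+1 *m - \sum_(k < j'.+1) c k *m ctmx (pquot a p j'.+1 k).
Proof.
move=> p_orth; rewrite /bquad exchange_big /= mulmxN mulmx_sumr -sumrN.
apply: eq_bigr => k _; rewrite -mulmx_suml sum_pquot_shat //.
by rewrite mulNmx mulmxA.
Qed.

Lemma peval_unit N j' p : hankel_orth c j'.+1 p -> p j'.+1 = 1%:M ->
  posdef (bhankel hs N) -> (j' <= N)%N -> peval a p j'.+1 \in unitmx.
Proof.
move=> p_orth p_lead H_pd le_jN.
have := bquad_unit H_pd le_jN (leqnn _) (etrans (pquot_lead a p j') p_lead).
by rewrite bquad_pquot_shat // unitmx_mul => /andP[].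
Qed.

(* [Theta] differs from [Gamma s_0] by the quotient part, which turns
   [Theta Gamma^*] into the Hermitian [Gamma s_0 Gamma^* + bquad]. *)
Lemma theta_gamma_sym j' p : hankel_orth c j'.+1 p ->
  (forall k, (k <= j'.*2.+2)%N -> ctmx (s k) = s k) ->
  let G := peval a p j'.+1 in
  let T := \sum_(k < j'.+2) p k *m
       horner_part a (fun l => if l == 0%N then s 0 else s l - b *: s l.-1) k in
  T *m ctmx G = G *m ctmx T.
Proof.
move=> p_orth s_herm G T.
set ut := fun l => if l == 0%N then s 0 else s l - b *: s l.-1.
set W := pquot a p j'.+1.
have T_eq : T = G *m s 0 - \sum_(m < j'.+1) W m *m c m.
  have := peval_quot a p j'.+1 (horner_part a ut); rewrite horner_part0 -/G -/T -/W.
  have -> : \sum_(m < j'.+1) W m *m (horner_part a ut m.+1 - a *: horner_part a ut m) =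
            - \sum_(m < j'.+1) W m *m c m.
    rewrite -sumrN; apply: eq_bigr => m _.
    by rewrite horner_partS addrC addKr /ut /= /sshift -mulmxN opprB.
  by move/eqP; rewrite subr_eq => /eqP ->; rewrite addrC.
have hs_herm k : (k <= j'.*2)%N -> ctmx (hs k) = hs k.
  by move=> le_k; apply: shat_herm; apply: s_herm; rewrite -addnn in le_k *; lia.
have c_herm m : (m <= j')%N -> ctmx (c m) = c m.
  by move=> le_m; apply: sshift_herm; apply: s_herm; rewrite -addnn; lia.
have WcG : (\sum_(m < j'.+1) W m *m c m) *m ctmx G = - bquad j' hs W.
  rewrite -[LHS]ctmxK ctmxM ctmxK ctmx_sum.
  under eq_bigr => m _ do rewrite ctmxM (c_herm _ (ltn_ord m)).
  by rewrite -[X in ctmx (G *m X)]opprK mulmxN -bquad_pquot_shat // ctmxN bquad_herm.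
have TG : T *m ctmx G = G *m s 0 *m ctmx G + bquad j' hs W.
  by rewrite T_eq mulmxBl WcG opprK.
have -> : G *m ctmx T = ctmx (T *m ctmx G) by rewrite ctmxM ctmxK.
by rewrite TG ctmxD bquad_herm // !ctmxM ctmxK (s_herm 0%N) // mulmxA.
Qed.

Lemma peval_ctmx_bquad j p : hankel_orth hs j p -> hankel_herm hs j ->
  (forall k, (k <= j)%N -> ctmx (c k) = c k) ->
  peval a p j *m ctmx (\sum_(k < j.+1) p k *m c k) = bquad j c p.
Proof.
move=> p_orth hs_herm c_herm; rewrite /bquad exchange_big /=.
have split_c k : \sum_(l < j.+1) p l *m c (l + k)%N =
    peval a p j *m c k + \sum_(m < j) pquot a p j m *m hs (m + k)%N.
  have := peval_quot a p j (fun i => c (i + k)%N); rewrite add0n => /eqP.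
  rewrite subr_eq => /eqP ->; rewrite addrC; congr (_ + _).
  by apply: eq_bigr => m _; rewrite shat_sshift addSn.
under [RHS]eq_bigr do rewrite -mulmx_suml split_c mulmxDl.
have vanish : \sum_(k < j.+1)
    (\sum_(m < j) pquot a p j m *m hs (m + k)%N) *m ctmx (p k) = 0.
  under eq_bigr do rewrite mulmx_suml.
  rewrite exchange_big /= big1 // => m _; under eq_bigr do rewrite -mulmxA.
  by rewrite -mulmx_sumr sum_hankel_ctmx ?p_orth ?ctmx0 ?mulmx0 // ltnW.
rewrite big_split /= vanish addr0 ctmx_sum mulmx_sumr; apply: eq_bigr => k _.
by rewrite ctmxM (c_herm _ (ltn_ord k)) mulmxA.
Qed.

Lemma sum_opoly_sshift_unit N j p : hankel_orth hs j p -> hankel_herm hs j ->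
  p j = 1%:M -> (forall k, (k <= j)%N -> ctmx (c k) = c k) ->
  posdef (bhankel c N) -> (j <= N)%N -> (\sum_(k < j.+1) p k *m c k) \in unitmx.
Proof.
move=> p_orth hs_herm p_lead c_herm H_pd le_jN.
have := bquad_unit H_pd le_jN (leqnn _) p_lead.
by rewrite -peval_ctmx_bquad // unitmx_mul ctmx_unit => /andP[].
Qed.

End ShiftedMoments.

Section BlockFactorizations.
Variables (C : numClosedFieldType) (q : nat).

Lemma block_factor_upper (G T K : 'M[C]_q) (x : C) :
  G \in unitmx -> T *m ctmx G = G *m ctmx T ->
  block_mx (1%:M - x *: (ctmx T *m invmx K *m G)) (x *: (ctmx T *m invmx K *m T))
           (- (x *: (ctmx G *m invmx K *m G))) (1%:M + x *: (ctmx G *m invmx K *m T)) =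
  block_mx 1%:M (invmx G *m T) 0 1%:M *m
  block_mx 1%:M 0 (- (x *: (ctmx G *m invmx K *m G))) 1%:M *m
  block_mx 1%:M (- (invmx G *m T)) 0 1%:M.
Proof.
move=> G_unit TG_sym.
set Ki := invmx K; set r := invmx G *m T.
have rG : r *m ctmx G = ctmx T by rewrite /r -mulmxA TG_sym mulmxA mulVmx // mul1mx.
have Gr : G *m r = T by rewrite /r mulmxA mulmxV // mul1mx.
have rM : r *m - (x *: (ctmx G *m Ki *m G)) = - (x *: (ctmx T *m Ki *m G)).
  by rewrite mulmxN -scalemxAr !mulmxA rG.
rewrite !mulmx_block !(mul1mx, mulmx1, mul0mx, mulmx0, add0r, addr0) rM.
congr block_mx.
- rewrite mulmxN mulmxDl mul1mx mulNmx -scalemxAl -!mulmxA Gr.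
  by rewrite opprD opprK addrC addrA addrN add0r.
- by rewrite mulNmx mulmxN opprK -scalemxAl -!mulmxA Gr addrC.
Qed.

Lemma block_factor_lower (P Q H : 'M[C]_q) (x : C) :
  Q \in unitmx -> P *m ctmx Q = Q *m ctmx P ->
  block_mx (1%:M + x *: (ctmx Q *m invmx H *m P)) (x *: (ctmx Q *m invmx H *m Q))
           (- (x *: (ctmx P *m invmx H *m P))) (1%:M - x *: (ctmx P *m invmx H *m Q)) =
  block_mx 1%:M 0 (- (invmx Q *m P)) 1%:M *m
  block_mx 1%:M (x *: (ctmx Q *m invmx H *m Q)) 0 1%:M *m
  block_mx 1%:M 0 (invmx Q *m P) 1%:M.
Proof.
move=> Q_unit PQ_sym.
set t := invmx Q *m P.
have tQ : t *m ctmx Q = ctmx P by rewrite /t -mulmxA PQ_sym mulmxA mulVmx // mul1mx.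
have Qt : Q *m t = P by rewrite /t mulmxA mulmxV // mul1mx.
rewrite !mulmx_block !(mul1mx, mulmx1, mul0mx, mulmx0, add0r, addr0).
congr block_mx.
- by rewrite -scalemxAl -!mulmxA Qt.
- rewrite mulmxDl mul1mx mulNmx -scalemxAr mulNmx -scalemxAl !mulmxA tQ -!mulmxA Qt.
  by rewrite addrCA addNr addr0.
- by rewrite mulNmx -scalemxAr !mulmxA tQ addrC.
Qed.

End BlockFactorizations.

Section Identification.
Variables (C : numClosedFieldType) (q : nat) (s : nat -> 'M[C]_q) (a b : C).
Implicit Types h : nat -> 'M[C]_q.

Local Notation c := (sshift s b).
Local Notation hs := (shat s a b).

Lemma Rm_vv j (z : C) : Rm q j z *m vv C q j = bcolmx (fun k => z ^+ k *: 1%:M) j.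
Proof.
rewrite /vv bcolE Rm_bcolmx; apply: eq_bcolmx => k _.
elim: k => [|k IH]; first by rewrite horner_part0 expr0 scale1r.
by rewrite horner_partS IH /= addr0 scalerA -exprS.
Qed.

Lemma peval_bcolmx_pow h j' :
  rowXI (orth_row h j') *m Rm q j'.+1 a *m vv C q j'.+1 = peval a (opoly h j'.+1) j'.+1.
Proof.
rewrite -mulmxA Rm_vv mul_rowXI_bcolmx_opoly; apply: eq_bigr => k _.
by rewrite -scalemxAr mulmx1.
Qed.

Lemma peval_opoly0 h : peval a (opoly h 0) 0 = 1%:M.
Proof. by rewrite /peval big_ord1 expr0 scale1r. Qed.

Lemma Gam1E j : Gam1 s b j a = peval a (opoly c j) j.
Proof. by case: j => [|j]; [rewrite peval_opoly0 | exact: peval_bcolmx_pow]. Qed.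

Lemma P2E j : P2 s a b j a = peval a (opoly hs j) j.
Proof. by case: j => [|j]; [rewrite peval_opoly0 | exact: peval_bcolmx_pow]. Qed.

Lemma The1E j' : The1 s b j'.+1 a = \sum_(k < j'.+2) opoly c j'.+1 k *m
  horner_part a (fun l => if l == 0%N then s 0%N else s l - b *: s l.-1) k.
Proof. by rewrite /= -mulmxA /ut1 bcolE Rm_bcolmx mul_rowXI_bcolmx_opoly. Qed.

Lemma hankel_hat0 h : hankel_hat h 0 (opoly h 0) = h 0%N.
Proof. by rewrite /hankel_hat big_ord1 mul1mx. Qed.

Lemma Khat1E j : bhankel c j.-1 \in unitmx -> Khat1 s b j = hankel_hat c j (opoly c j).
Proof. by case: j => [|j] H_unit; rewrite ?hankel_hat0 // -opoly_hat. Qed.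

Lemma Hhat2E j : bhankel hs j.-1 \in unitmx -> Hhat2 s a b j = hankel_hat hs j (opoly hs j).
Proof. by case: j => [|j] H_unit; rewrite ?hankel_hat0 // -opoly_hat. Qed.

Lemma muE j : mu s a b j = inv_form c j (fun k => a ^+ k *: 1%:M).
Proof. by rewrite /mu /inv_form -ctmxM -mulmxA Rm_vv. Qed.

Lemma Rm_u2 j :
  Rm q j a *m (u2 s a b j + a *: (vv C q j *m s 0%N)) = bcolmx (fun k => - c k) j.
Proof.
rewrite /u2 /vv !bcolE bcolmx_mul bcolmxZ bcolmxD Rm_bcolmx; apply: eq_bcolmx => k _.
elim: k => [|k IH].
  by rewrite horner_part0 /= mul1mx; apply/matrixP => i l; rewrite /u20 /sshift !mxE; ring.
rewrite horner_partS IH /= mul0mx scaler0 addr0 shat_sshift.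
by apply/matrixP => i l; rewrite !mxE; ring.
Qed.

Lemma lamE j : lam s a b j = inv_form hs j (fun k => - c k).
Proof. by rewrite /lam /inv_form -ctmxM -mulmxA Rm_u2. Qed.

Lemma Q2E j : Q2 s a b j a = \sum_(k < j.+1) opoly hs j k *m c k.
Proof.
case: j => [|j].
  by rewrite big_ord1 mul1mx; apply/matrixP => i l; rewrite /Q2 /u20 /sshift !mxE; ring.
rewrite /= -mulmxA Rm_u2 mul_rowXI_bcolmx_opoly -sumrN; apply: eq_bigr => k _.
by rewrite mulmxN opprK.
Qed.

End Identification.

Section StandingAssumptions.
Variables (C : numClosedFieldType) (q n : nat) (s : nat -> 'M[C]_q) (a b : C).
Hypotheses (a_real : a^* = a) (b_real : b^* = b).
Hypothesis s_herm : forall k, (k <= n.+1.*2.+1)%N -> ctmx (s k) = s k.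
Hypotheses (K1_pd : posdef (bhankel (sshift s b) n.+1))
           (H2_pd : posdef (bhankel (shat s a b) n)).

Local Notation c := (sshift s b).
Local Notation hs := (shat s a b).

Lemma c_herm : hankel_herm c n.+1.
Proof.
by move=> k le_k; apply: sshift_herm => //; apply: s_herm; rewrite -addnn in le_k *; lia.
Qed.

Lemma hs_herm : hankel_herm hs n.
Proof.
by move=> k le_k; apply: shat_herm => //; apply: s_herm; rewrite -addnn in le_k *; lia.
Qed.

Lemma c_opoly_orth j : (j <= n.+1)%N -> hankel_orth c j (opoly c j).
Proof.
move=> le_jn; apply: opoly_orth; last exact: hankel_herm_le c_herm le_jn.
exact: bhankel_unit K1_pd (leq_trans (leq_pred j) le_jn).
Qed.

Lemma hs_opoly_orth j : (j <= n)%N -> hankel_orth hs j (opoly hs j).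
Proof.
move=> le_jn; apply: opoly_orth; last exact: hankel_herm_le hs_herm le_jn.
exact: bhankel_unit H2_pd (leq_trans (leq_pred j) le_jn).
Qed.

Lemma c_hat_unit j : (j <= n.+1)%N -> hankel_hat c j (opoly c j) \in unitmx.
Proof.
move=> le_jn; rewrite hankel_hat_bquad ?opoly_lead //.
- exact: bquad_unit K1_pd le_jn (leqnn j) (opoly_lead c j).
- exact: c_opoly_orth.
- exact: hankel_herm_le c_herm le_jn.
Qed.

Lemma hs_hat_unit j : (j <= n)%N -> hankel_hat hs j (opoly hs j) \in unitmx.
Proof.
move=> le_jn; rewrite hankel_hat_bquad ?opoly_lead //.
- exact: bquad_unit H2_pd le_jn (leqnn j) (opoly_lead hs j).
- exact: hs_opoly_orth.
- exact: hankel_herm_le hs_herm le_jn.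
Qed.

Lemma Gam1_unit j : (j <= n.+1)%N -> Gam1 s b j a \in unitmx.
Proof.
rewrite Gam1E; case: j => [_|j le_jn]; first by rewrite peval_opoly0 unitmx1.
exact: peval_unit (c_opoly_orth le_jn) (opoly_lead c j.+1) H2_pd le_jn.
Qed.

Lemma Q2_unit j : (j <= n)%N -> Q2 s a b j a \in unitmx.
Proof.
move=> le_jn; rewrite Q2E; apply: sum_opoly_sshift_unit K1_pd _.
- exact: hs_opoly_orth.
- exact: hankel_herm_le hs_herm le_jn.
- exact: opoly_lead.
- by move=> k le_kj; apply: c_herm; rewrite -addnn; lia.
- lia.
Qed.

Lemma The1_Gam1_sym j : (j <= n.+1)%N ->
  The1 s b j a *m ctmx (Gam1 s b j a) = Gam1 s b j a *m ctmx (The1 s b j a).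
Proof.
case: j => [_|j le_jn]; first by rewrite /= ctmx1 mulmx1 mul1mx s_herm.
rewrite The1E Gam1E; apply: theta_gamma_sym => //; first exact: c_opoly_orth.
by move=> k le_k; apply: s_herm; rewrite -addnn in le_k *; lia.
Qed.

Lemma P2_Q2_sym j : (j <= n)%N ->
  P2 s a b j a *m ctmx (Q2 s a b j a) = Q2 s a b j a *m ctmx (P2 s a b j a).
Proof.
move=> le_jn; rewrite P2E Q2E.
set G := peval a _ j; set Q := \sum_(k < j.+1) _.
have -> : Q *m ctmx G = ctmx (G *m ctmx Q) by rewrite ctmxM ctmxK.
have c_herm_j : hankel_herm c j := hankel_herm_le c_herm (leq_trans le_jn (leqnSn n)).
have hs_herm_j : hankel_herm hs j := hankel_herm_le hs_herm le_jn.
rewrite peval_ctmx_bquad ?bquad_herm //; first exact: hs_opoly_orth.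
by move=> k le_kj; apply: c_herm_j; rewrite (leq_trans le_kj) // -addnn leq_addr.
Qed.

Lemma mbfE j : (j <= n.+1)%N ->
  mbf s a b j = ctmx (Gam1 s b j a) *m invmx (Khat1 s b j) *m Gam1 s b j a.
Proof.
have c_unit i : (i <= n.+1)%N -> bhankel c i \in unitmx by exact: bhankel_unit K1_pd.
case: j => [_|j le_jn].
  have c0_unit : c 0%N \in unitmx by rewrite -(hankel_hat0 c) c_hat_unit.
  by rewrite /mbf muE inv_form0 ?c_unit ?c_herm //= expr0 scale1r ctmx1.
have c_unit_j := c_unit j (ltnW le_jn).
rewrite /mbf !muE (inv_formS _ (c_opoly_orth le_jn) (opoly_lead c j.+1)
  (hankel_herm_le c_herm le_jn) (c_unit _ le_jn) c_unit_j (c_hat_unit le_jn)).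
rewrite -(Khat1E (j := j.+1) c_unit_j) Gam1E.
by congr (ctmx _ *m _ *m _); apply: eq_bigr => k _; rewrite -scalemxAr mulmx1.
Qed.

Lemma lbfE j : (j <= n)%N ->
  lbf s a b j = ctmx (Q2 s a b j a) *m invmx (Hhat2 s a b j) *m Q2 s a b j a.
Proof.
have hs_unit i : (i <= n)%N -> bhankel hs i \in unitmx by exact: bhankel_unit H2_pd.
case: j => [_|j le_jn].
  have hs0_unit : hs 0%N \in unitmx by rewrite -(hankel_hat0 hs) hs_hat_unit.
  rewrite /lbf lamE inv_form0 ?hs_unit ?hs_herm // Q2E big_ord1 mul1mx.
  by rewrite ctmxN !mulNmx mulmxN opprK.
have hs_unit_j := hs_unit j (ltnW le_jn).
rewrite /lbf !lamE (inv_formS _ (hs_opoly_orth le_jn) (opoly_lead hs j.+1)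
  (hankel_herm_le hs_herm le_jn) (hs_unit _ le_jn) hs_unit_j (hs_hat_unit le_jn)).
rewrite -(Hhat2E (j := j.+1) hs_unit_j) Q2E.
rewrite -[in RHS](opprK (\sum_(k < j.+2) _)) -sumrN.
under [in RHS]eq_bigr do rewrite -mulmxN.
by rewrite ctmxN !mulNmx mulmxN opprK.
Qed.

End StandingAssumptions.
Unset Implicit Arguments.

Theorem mainTheorem5 (C : numClosedFieldType) (q n : nat) (s : nat -> 'M[C]_q) (a b : C) :
  (0 < q)%N -> (0 < n)%N ->
  a \is Num.real -> b \is Num.real -> a < b ->
  (forall k, (k <= n.*2.+1)%N -> hermmx (s k)) ->
  posdef (H1 s n) -> posdef (H2 s a b n.-1) -> posdef (K1 s b n) -> posdef (K2 s a n) ->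
  (forall j, (j <= n)%N -> Gam1 s b j a \in unitmx) /\
  (forall j, (j < n)%N -> Q2 s a b j a \in unitmx) /\
  (forall j, (j <= n)%N -> forall z : C,
     let r := invmx (Gam1 s b j a) *m The1 s b j a in
     d_odd s a b j z =
       block_mx 1%:M r 0 1%:M *m block_mx 1%:M 0 (- ((z - a) *: mbf s a b j)) 1%:M
       *m block_mx 1%:M (- r) 0 1%:M) /\
  (forall j, (j < n)%N -> forall z : C,
     let t := invmx (Q2 s a b j a) *m P2 s a b j a in
     d_even s a b j z =
       block_mx 1%:M 0 (- t) 1%:M *m block_mx 1%:M ((z - a) *: lbf s a b j) 0 1%:M
       *m block_mx 1%:M 0 t 1%:M).
Proof.
move=> _ n_gt0 /conj_Creal a_real /conj_Creal b_real _ s_herm _ H2_pd K1_pd _.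
case: n n_gt0 s_herm H2_pd K1_pd => [//|n] _ s_herm H2_pd K1_pd.
have Gam1_unit := Gam1_unit b_real s_herm K1_pd H2_pd.
have Q2_unit := Q2_unit a_real b_real s_herm K1_pd H2_pd.
split; first exact: Gam1_unit.
split; first exact: Q2_unit.
split=> j le_jn z.
  rewrite /d_odd /= (mbfE a b_real s_herm K1_pd le_jn).
  exact: block_factor_upper (Gam1_unit j le_jn)
    (The1_Gam1_sym a_real b_real s_herm K1_pd le_jn).
rewrite /d_even /= (lbfE a_real b_real s_herm H2_pd le_jn).
exact: block_factor_lower (Q2_unit j le_jn) (P2_Q2_sym a_real b_real s_herm H2_pd le_jn).
Qed.
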